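(* Let $n\ge1$ and $\lambda=(\lambda_1,\dots,\lambda_n)\in\mathbb{R}^n$ with $0<\lambda_1\le\cdots\le\lambda_n$, and let $(\mathfrak{a},\langle\cdot,\cdot\rangle_{\mathfrak{a}})$ be an abelian quadratic Lie algebra. Endow $\mathrm{osc}(\lambda)\times\mathfrak{a}$ with the product quadratic structure. Then every derivation $D$ of $\mathrm{osc}(\lambda)\times\mathfrak{a}$ which is skew-symmetric with respect to the product form satisfies $D(e_0)=0$. In particular, $\mathrm{osc}(\lambda)\times\mathfrak{a}$ admits no $k$-symplectic structure for any $k\ge1$.
   Context: The oscillator Lie algebra $\mathrm{osc}(\lambda)$ has basis $\{e_{-1},e_0,e_i,\check e_i\}_{i=1,\dots,n}$ with nonvanishing brackets $[e_{-1},e_i]=\lambda_i\check e_i$, $[e_{-1},\check e_i]=-\lambda_ie_i$, $[e_i,\check e_i]=e_0$ (and those obtained by antisymmetry), and invariant quadratic form given for $x=x_{-1}e_{-1}+x_0e_0+\sum_i(x_ie_i+y_i\check e_i)$ by $\langle x,x\rangle=2x_{-1}x_0+\sum_i\frac{1}{\lambda_i}(x_i^2+y_i^2)$. An abelian quadratic Lie algebra is an abelian real Lie algebra with a nondegenerate symmetric bilinear form; the product structure is the Lie algebra direct product with orthogonal sum of forms. A $k$-symplectic structure on a real Lie algebra $\mathfrak{k}$ of dimension $m(k+1)$ ($m,k\ge1$) is a pair consisting of a Lie subalgebra $\mathfrak{h}\subset\mathfrak{k}$ of dimension $mk$ and a family $(\theta_1,\dots,\theta_k)$ of skew-symmetric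 bilinear forms on $\mathfrak{k}$ such that: (i) $\bigcap_{i=1}^k\ker\theta_i=\{0\}$, where $\ker\theta_i=\{u:\theta_i(u,v)=0\ \forall v\}$; (ii) each $\theta_i$ is a 2-cocycle: $\theta_i([u,v],w)+\theta_i([v,w],u)+\theta_i([w,u],v)=0$ for all $u,v,w$; (iii) $\theta_i(u,v)=0$ for all $u,v\in\mathfrak{h}$ and all $i$. *)

From HB Require Import structures.
From mathcomp Require Import all_boot all_order all_algebra.
From mathcomp Require Import reals.
Set Implicit Arguments. Unset Strict Implicit. Unset Printing Implicit Defensive.
Import Order.TTheory GRing.Theory Num.Theory.
Local Open Scope ring_scope.

(* The underlying space of osc(lambda) x a is R^(2 + n + n + p), encoded as
   row vectors 'rV[R]_(2 + n + n + p) with coordinates ordered as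
   (x_{-1}, x_0 | x_1 .. x_n | y_1 .. y_n | a_1 .. a_p),
   i.e. in the basis (e_{-1}, e_0, e_1..e_n, check e_1..check e_n, basis of a). *)

Section Osc.
Variables (R : realType) (n p : nat).

Definition dimOA := (2 + n + n + p)%N.

Definition i_m1 : 'I_dimOA := lshift p (lshift n (lshift n (@Ordinal 2 0 isT))).
Definition i_0  : 'I_dimOA := lshift p (lshift n (lshift n (@Ordinal 2 1 isT))).
Definition i_e (i : 'I_n) : 'I_dimOA := lshift p (lshift n (rshift 2 i)).
Definition i_ce (i : 'I_n) : 'I_dimOA := lshift p (rshift (2 + n) i).
Definition i_a (j : 'I_p) : 'I_dimOA := rshift (2 + n + n) j.

Definition e0 : 'rV[R]_dimOA := delta_mx 0 i_0.

Variable lam : 'I_n -> R.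

(* Lie bracket of osc(lambda) x a (a abelian):
   [e_{-1}, e_i] = lam_i check e_i, [e_{-1}, check e_i] = - lam_i e_i,
   [e_i, check e_i] = e_0. *)
Definition oscBr (u v : 'rV[R]_dimOA) : 'rV[R]_dimOA :=
  \row_(k < dimOA)
    (if k == i_0 then
       \sum_(i < n) (u 0 (i_e i) * v 0 (i_ce i) - u 0 (i_ce i) * v 0 (i_e i))
     else \sum_(i < n)
       ((k == i_e i)%:R * (- lam i * (u 0 i_m1 * v 0 (i_ce i) - v 0 i_m1 * u 0 (i_ce i)))
        + (k == i_ce i)%:R * (lam i * (u 0 i_m1 * v 0 (i_e i) - v 0 i_m1 * u 0 (i_e i))))).

Definition oscForm (B : 'M[R]_p) (u v : 'rV[R]_dimOA) : R :=
  u 0 i_m1 * v 0 i_0 + u 0 i_0 * v 0 i_m1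
  + \sum_(i < n) (u 0 (i_e i) * v 0 (i_e i) + u 0 (i_ce i) * v 0 (i_ce i)) / lam i
  + \sum_(j < p) \sum_(l < p) u 0 (i_a j) * B j l * v 0 (i_a l).

End Osc.

(* A subalgebra h of dimension m*k is given by the row space of a
   matrix H of rank m*k; the skew-symmetric bilinear forms theta_i are
   (u, v) |-> u T_i v^T with T_i skew-symmetric matrices. *)
Definition k_symplectic (R : realType) (N : nat)
    (br : 'rV[R]_N -> 'rV[R]_N -> 'rV[R]_N) (k : nat) : Prop :=
  exists m : nat, (0 < m)%N /\ N = (m * k.+1)%N /\
  exists (H : 'M[R]_(m * k, N)) (T : 'I_k -> 'M[R]_N),
    let theta i (u v : 'rV[R]_N) := (u *m T i *m v^T) 0 0 in
    \rank H = (m * k)%N /\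
    (forall u v, (u <= H)%MS -> (v <= H)%MS -> (br u v <= H)%MS) /\
    (forall i, (T i)^T = - T i) /\
    (forall u, (forall i v, theta i u v = 0) -> u = 0) /\
    (forall i u v w,
        theta i (br u v) w + theta i (br v w) u + theta i (br w u) v = 0) /\
    (forall i u v, (u <= H)%MS -> (v <= H)%MS -> theta i u v = 0).

From HB Require Import structures.
From mathcomp Require Import all_boot all_order all_algebra.
From mathcomp Require Import reals.
From mathcomp Require Import zify ring.
Import Order.TTheory GRing.Theory Num.Theory.
Local Open Scope ring_scope.

(* The whole argument rests on the central element e_0 of osc(lambda) x a.
   - e_0 is central, and a vector commuting with e_{-1} has no e_i- and no
     check e_i-components (because every lambda_i is nonzero); moreover every
     bracket lies in span(e_0, e_i, check e_i).
   - A derivation D maps the centre into the centre, so e_0 D has no e_i- or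
     check e_i-components.  Writing e_0 = [e_1, check e_1] (n >= 1), the
     Leibniz rule puts e_0 D in the derived algebra, hence in R e_0, and its
     e_0-coordinate (e_1 D)_{e_1} + (check e_1 D)_{check e_1} vanishes when D
     is skew, since the form is diagonal on the oscillator block.
   - Every skew-symmetric 2-cocycle theta has e_0 in its kernel: the cocycle
     identity on (e_1, check e_1, e_{-1}), (e_{-1}, e_0, w) and
     (e_1, check e_1, a_j) gives theta(e_0, w) = 0 on every basis vector w.
     A nonzero vector in the kernel of all cocycles rules out condition (i)
     of a k-symplectic structure. *)

Definition bform {R : pzRingType} {N : nat} (T : 'M[R]_N) (u v : 'rV[R]_N) : R :=
  (u *m T *m v^T) 0 0.

Section BilinearForms.
Variables (R : numDomainType) (N : nat) (T : 'M[R]_N).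
Hypothesis T_skew : T^T = - T.

Lemma bformZl (c : R) u v : bform T (c *: u) v = c * bform T u v.
Proof. by rewrite /bform -!scalemxAl mxE. Qed.

Lemma bform0l v : bform T 0 v = 0.
Proof. by rewrite /bform !mul0mx mxE. Qed.

Lemma bform_skew u v : bform T v u = - bform T u v.
Proof.
have -> : bform T v u = (v *m T *m u^T)^T 0 0 by rewrite mxE.
by rewrite !trmx_mul trmxK T_skew mulNmx mulmxN mulmxA mxE.
Qed.

(* An alternating form vanishes on the diagonal (R has characteristic 0). *)
Lemma bform_diag u : bform T u u = 0.
Proof.
have /eqP : bform T u u *+ 2 = 0 by rewrite mulr2n {1}bform_skew addNr.
by rewrite mulrn_eq0 /= => /eqP.
Qed.

Lemma bform_basis u :
  (forall k, bform T u (delta_mx 0 k) = 0) -> forall v, bform T u v = 0.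
Proof.
move=> Hbasis v; rewrite /bform mxE; apply: big1 => k _.
have := Hbasis k; rewrite /bform mxE (bigD1 k) //= big1 => [|j /negbTE Hj].
  by rewrite !mxE !eqxx /= mulr1 addr0 => ->; rewrite mul0r.
by rewrite !mxE Hj mulr0.
Qed.

End BilinearForms.

Lemma derivation_central {R : pzRingType} {N : nat}
    {br : 'rV[R]_N -> 'rV[R]_N -> 'rV[R]_N} {D : 'M[R]_N} {c : 'rV[R]_N} :
  (forall u v, br u v *m D = br (u *m D) v + br u (v *m D)) ->
  (forall v, br c v = 0) -> forall v, br (c *m D) v = 0.
Proof. by move=> Hder Hc v; have := Hder c v; rewrite !Hc mul0mx addr0 => <-. Qed.

Lemma kernel_obstruction (R : realType) (N : nat)
    (br : 'rV[R]_N -> 'rV[R]_N -> 'rV[R]_N) (x : 'rV[R]_N) (k : nat) :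
  x != 0 ->
  (forall T : 'M[R]_N, T^T = - T ->
     (forall u v w, bform T (br u v) w + bform T (br v w) u + bform T (br w u) v = 0) ->
     forall v, bform T x v = 0) ->
  ~ k_symplectic br k.
Proof.
move=> /negP x_neq0 Hker [? [_ [_ [? [T [_ [_ [T_skew [ker [cocycle _]]]]]]]]]].
by apply: x_neq0; apply/eqP; apply: ker => i v; exact: (Hker _ (T_skew i) (cocycle i)).
Qed.

Section Oscillator.
Variables (R : realType) (n p : nat) (lam : 'I_n -> R).
Hypothesis lam_neq0 : forall i, lam i != 0.

Local Notation N := (dimOA n p).
Local Notation m1 := (i_m1 n p).
Local Notation z := (i_0 n p).
Local Notation ie := (@i_e n p).
Local Notation ic := (@i_ce n p).
Local Notation ia := (@i_a n p).
Local Notation dl a := (delta_mx 0 a : 'rV[R]_N).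
Local Notation br := (oscBr lam).

Lemma val_m1 : (m1 : nat) = 0%N. Proof. by []. Qed.
Lemma val_z : (z : nat) = 1%N. Proof. by []. Qed.
Lemma val_e i : (ie i : nat) = (2 + i)%N. Proof. by []. Qed.
Lemma val_c i : (ic i : nat) = (2 + n + i)%N. Proof. by []. Qed.
Lemma val_a j : (ia j : nat) = (2 + n + n + j)%N. Proof. by []. Qed.

Ltac distinct_coords :=
  apply/negbTE/eqP => /(congr1 (@nat_of_ord _));
  rewrite ?val_m1 ?val_z ?val_e ?val_c ?val_a;
  repeat match goal with i : 'I_ _ |- _ =>
    move: (ltn_ord i); move: (nat_of_ord i) => ?; clear i end;
  lia.

Lemma eq_m1z : (m1 == z) = false. Proof. distinct_coords. Qed.
Lemma eq_zm1 : (z == m1) = false. Proof. distinct_coords. Qed.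
Lemma eq_m1e i : (m1 == ie i) = false. Proof. distinct_coords. Qed.
Lemma eq_em1 i : (ie i == m1) = false. Proof. distinct_coords. Qed.
Lemma eq_m1c i : (m1 == ic i) = false. Proof. distinct_coords. Qed.
Lemma eq_cm1 i : (ic i == m1) = false. Proof. distinct_coords. Qed.
Lemma eq_m1a i : (m1 == ia i) = false. Proof. distinct_coords. Qed.
Lemma eq_am1 i : (ia i == m1) = false. Proof. distinct_coords. Qed.
Lemma eq_ze i : (z == ie i) = false. Proof. distinct_coords. Qed.
Lemma eq_ez i : (ie i == z) = false. Proof. distinct_coords. Qed.
Lemma eq_zc i : (z == ic i) = false. Proof. distinct_coords. Qed.
Lemma eq_cz i : (ic i == z) = false. Proof. distinct_coords. Qed.
Lemma eq_za i : (z == ia i) = false. Proof. distinct_coords. Qed.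
Lemma eq_az i : (ia i == z) = false. Proof. distinct_coords. Qed.
Lemma eq_ec i j : (ie i == ic j) = false. Proof. distinct_coords. Qed.
Lemma eq_ce i j : (ic i == ie j) = false. Proof. distinct_coords. Qed.
Lemma eq_ea i j : (ie i == ia j) = false. Proof. distinct_coords. Qed.
Lemma eq_ae i j : (ia i == ie j) = false. Proof. distinct_coords. Qed.
Lemma eq_ca i j : (ic i == ia j) = false. Proof. distinct_coords. Qed.
Lemma eq_ac i j : (ia i == ic j) = false. Proof. distinct_coords. Qed.

Lemma eq_ee i j : (ie i == ie j) = (i == j).
Proof. by apply/eqP/eqP => [/(congr1 (@nat_of_ord _))|->//]; rewrite !val_e => /addnI /val_inj. Qed.
Lemma eq_cc i j : (ic i == ic j) = (i == j).
Proof. by apply/eqP/eqP => [/(congr1 (@nat_of_ord _))|->//]; rewrite !val_c => /addnI /val_inj. Qed.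
Lemma eq_aa i j : (ia i == ia j) = (i == j).
Proof. by apply/eqP/eqP => [/(congr1 (@nat_of_ord _))|->//]; rewrite !val_a => /addnI /val_inj. Qed.

Definition coordE := (eq_m1z, eq_zm1, eq_m1e, eq_em1, eq_m1c, eq_cm1, eq_m1a,
  eq_am1, eq_ze, eq_ez, eq_zc, eq_cz, eq_za, eq_az, eq_ec, eq_ce, eq_ea, eq_ae,
  eq_ca, eq_ac, eq_ee, eq_cc, eq_aa).

Lemma coord_cases (k : 'I_N) :
  k = m1 \/ k = z \/ (exists i, k = ie i) \/ (exists i, k = ic i) \/ (exists j, k = ia j).
Proof.
case: k => k Hk; have Hk' := Hk; rewrite /dimOA in Hk'.
have [H1|H1] := ltnP k 1; first by left; apply/ord_inj; rewrite val_m1 /=; lia.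
have [H2|H2] := ltnP k 2; first by right; left; apply/ord_inj; rewrite val_z /=; lia.
have [H3|H3] := ltnP k (2 + n).
  have Hi : (k - 2 < n)%N by lia.
  by right; right; left; exists (Ordinal Hi); apply/ord_inj; rewrite val_e /=; lia.
have [H4|H4] := ltnP k (2 + n + n).
  have Hi : (k - (2 + n) < n)%N by lia.
  by right; right; right; left; exists (Ordinal Hi); apply/ord_inj; rewrite val_c /=; lia.
have Hi : (k - (2 + n + n) < p)%N by lia.
by right; right; right; right; exists (Ordinal Hi); apply/ord_inj; rewrite val_a /=; lia.
Qed.

Ltac case_coord k := case: (coord_cases k) => [->|[->|[[i ->]|[[i ->]|[i ->]]]]].

Lemma deltaE a k : dl a 0 k = (k == a)%:R.
Proof. by rewrite mxE eqxx. Qed.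

Ltac simpl_delta := rewrite ?deltaE ?coordE ?eqxx /= ?mulr0n ?mulr1n.

Lemma oscBr_m1 u v : br u v 0 m1 = 0.
Proof. by rewrite mxE coordE big1 // => i _; simpl_delta; ring. Qed.

Lemma oscBr_a u v j : br u v 0 (ia j) = 0.
Proof. by rewrite mxE coordE big1 // => i _; simpl_delta; ring. Qed.

Lemma oscBr_z u v :
  br u v 0 z = \sum_(i < n) (u 0 (ie i) * v 0 (ic i) - u 0 (ic i) * v 0 (ie i)).
Proof. by rewrite mxE eqxx. Qed.

Lemma oscBr_e u v j :
  br u v 0 (ie j) = - lam j * (u 0 m1 * v 0 (ic j) - v 0 m1 * u 0 (ic j)).
Proof.
rewrite mxE coordE (bigD1 j) //= big1 => [|i /negbTE Hij]; simpl_delta; first ring.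
by rewrite eq_sym Hij /= mulr0n; ring.
Qed.

Lemma oscBr_c u v j :
  br u v 0 (ic j) = lam j * (u 0 m1 * v 0 (ie j) - v 0 m1 * u 0 (ie j)).
Proof.
rewrite mxE coordE (bigD1 j) //= big1 => [|i /negbTE Hij]; simpl_delta; first ring.
by rewrite eq_sym Hij /= mulr0n; ring.
Qed.

Definition oscBrE := (oscBr_m1, oscBr_a, oscBr_z, oscBr_e, oscBr_c).

(* The bracket only sees the e_{-1}, e_i and check e_i coordinates; in
   particular e_0 and the abelian factor a are central. *)
Definition osc_free (u : 'rV[R]_N) : Prop :=
  [/\ u 0 m1 = 0, forall i, u 0 (ie i) = 0 & forall i, u 0 (ic i) = 0].

Lemma osc_free_z : osc_free (dl z).
Proof. by split=> *; simpl_delta. Qed.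

Lemma osc_free_a j : osc_free (dl (ia j)).
Proof. by split=> *; simpl_delta. Qed.

Lemma oscBr_free_l {u} : osc_free u -> forall v, br u v = 0.
Proof.
case=> H1 H2 H3 v; apply/rowP => k; rewrite [RHS]mxE.
case_coord k; rewrite !oscBrE ?H1 ?H2 ?H3; try ring.
by apply: big1 => i _; rewrite H2 H3; ring.
Qed.

Lemma oscBr_free_r {v} : osc_free v -> forall u, br u v = 0.
Proof.
case=> H1 H2 H3 u; apply/rowP => k; rewrite [RHS]mxE.
case_coord k; rewrite !oscBrE ?H1 ?H2 ?H3; try ring.
by apply: big1 => i _; rewrite H2 H3; ring.
Qed.

Lemma commute_m1_e {x} : br x (dl m1) = 0 -> forall j, x 0 (ie j) = 0.
Proof.
move=> Hx j; have /eqP := congr1 (fun w : 'rV[R]_N => w 0 (ic j)) Hx.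
rewrite /= oscBr_c; simpl_delta; rewrite mxE mulr0 mul1r sub0r mulrN.
by rewrite oppr_eq0 mulf_eq0 (negbTE (lam_neq0 j)) => /eqP.
Qed.

Lemma commute_m1_c {x} : br x (dl m1) = 0 -> forall j, x 0 (ic j) = 0.
Proof.
move=> Hx j; have /eqP := congr1 (fun w : 'rV[R]_N => w 0 (ie j)) Hx.
rewrite /= oscBr_e; simpl_delta; rewrite mxE mulr0 mul1r sub0r mulrN mulNr opprK.
by rewrite mulf_eq0 (negbTE (lam_neq0 j)) => /eqP.
Qed.

Lemma e0_neq0 : e0 R n p != 0.
Proof.
apply/eqP => /rowP /(_ z) /eqP; rewrite mxE [X in _ == X]mxE; simpl_delta.
by rewrite oner_eq0.
Qed.

Lemma oscBr_basis_e0 j : br (dl (ie j)) (dl (ic j)) = dl z.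
Proof.
apply/rowP => k; case_coord k; rewrite !oscBrE; simpl_delta; try ring.
by rewrite (bigD1 j) //= big1 => [|l /negbTE Hl]; simpl_delta; rewrite ?Hl /= ?mulr0n; ring.
Qed.

Lemma oscBr_basis_cm1 j : br (dl (ic j)) (dl m1) = lam j *: dl (ie j).
Proof.
apply/rowP => k; rewrite [RHS]mxE; case_coord k; rewrite !oscBrE; simpl_delta; try ring.
- by rewrite big1 ?mulr0 // => l _; simpl_delta; ring.
- by case: eqVneq => [->|/negbTE Hij]; simpl_delta; rewrite ?Hij /= ?mulr0n; ring.
Qed.

Lemma oscBr_basis_em1 j : br (dl (ie j)) (dl m1) = - lam j *: dl (ic j).
Proof.
apply/rowP => k; rewrite [RHS]mxE; case_coord k; rewrite !oscBrE; simpl_delta; try ring.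
- by rewrite big1 ?mulr0 // => l _; simpl_delta; ring.
- by case: eqVneq => [->|/negbTE Hij]; simpl_delta; rewrite ?Hij /= ?mulr0n; ring.
Qed.

Lemma oscBr_basis_m1e j : br (dl m1) (dl (ie j)) = lam j *: dl (ic j).
Proof.
apply/rowP => k; rewrite [RHS]mxE; case_coord k; rewrite !oscBrE; simpl_delta; try ring.
- by rewrite big1 ?mulr0 // => l _; simpl_delta; ring.
- by case: eqVneq => [->|/negbTE Hij]; simpl_delta; rewrite ?Hij /= ?mulr0n; ring.
Qed.

Lemma oscBr_z_el j v : br (dl (ie j)) v 0 z = v 0 (ic j).
Proof.
rewrite oscBr_z (bigD1 j) //= big1 => [|l /negbTE Hl]; simpl_delta; rewrite ?Hl /= ?mulr0n; ring.
Qed.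

Lemma oscBr_z_cr j u : br u (dl (ic j)) 0 z = u 0 (ie j).
Proof.
rewrite oscBr_z (bigD1 j) //= big1 => [|l /negbTE Hl]; simpl_delta; rewrite ?Hl /= ?mulr0n; ring.
Qed.

Section Form.
Variable B : 'M[R]_p.
Local Notation form := (oscForm lam B).

Lemma oscForm_delta_r u i k : k \in [:: ie i; ic i] -> form u (dl k) = u 0 k / lam i.
Proof.
rewrite /oscForm !inE => /orP[] /eqP ->; simpl_delta;
  rewrite (bigD1 i) //= big1 => [|l /negbTE Hl]; simpl_delta; rewrite ?Hl /= ?mulr0n;
  try rewrite big1 => [|j _]; try (by rewrite big1 // => l _; simpl_delta; ring); ring.
Qed.

Lemma oscForm_delta_l u i k : k \in [:: ie i; ic i] -> form (dl k) u = u 0 k / lam i.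
Proof.
rewrite /oscForm !inE => /orP[] /eqP ->; simpl_delta;
  rewrite (bigD1 i) //= big1 => [|l /negbTE Hl]; simpl_delta; rewrite ?Hl /= ?mulr0n;
  try rewrite big1 => [|j _]; try (by rewrite big1 // => l _; simpl_delta; ring); ring.
Qed.

Lemma skew_diag_osc {D : 'M[R]_N} {i k} : k \in [:: ie i; ic i] ->
  (forall u v, form (u *m D) v + form u (v *m D) = 0) -> (dl k *m D) 0 k = 0.
Proof.
move=> Hk /(_ (dl k) (dl k)).
rewrite (oscForm_delta_r _ _ _ Hk) (oscForm_delta_l _ _ _ Hk) -mulrDl => /eqP.
rewrite mulf_eq0 invr_eq0 (negbTE (lam_neq0 i)) orbF -mulr2n mulrn_eq0 /=.
by move/eqP.
Qed.

Lemma skew_derivation_e0 (i0 : 'I_n) (D : 'M[R]_N) :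
  (forall u v, br u v *m D = br (u *m D) v + br u (v *m D)) ->
  (forall u v, form (u *m D) v + form u (v *m D) = 0) ->
  dl z *m D = 0.
Proof.
move=> Hder Hskew.
have central := derivation_central Hder (oscBr_free_l osc_free_z).
have xe := commute_m1_e (central (dl m1)).
have xc := commute_m1_c (central (dl m1)).
have leibniz : dl z *m D = br (dl (ie i0) *m D) (dl (ic i0)) + br (dl (ie i0)) (dl (ic i0) *m D).
  by rewrite -Hder oscBr_basis_e0.
have diag_e := skew_diag_osc (mem_head (ie i0) [:: ic i0]) Hskew.
have diag_c := skew_diag_osc (mem_last (ie i0) [:: ic i0]) Hskew.
apply/rowP => k; rewrite [RHS]mxE; case_coord k; rewrite ?xe ?xc //.
- by rewrite leibniz mxE !oscBr_m1 addr0.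
- by rewrite leibniz mxE oscBr_z_cr oscBr_z_el diag_e diag_c addr0.
- by rewrite leibniz mxE !oscBr_a addr0.
Qed.

End Form.

Lemma cocycle_kernel_e0 (i0 : 'I_n) (T : 'M[R]_N) : T^T = - T ->
  (forall u v w, bform T (br u v) w + bform T (br v w) u + bform T (br w u) v = 0) ->
  forall v, bform T (dl z) v = 0.
Proof.
move=> T_skew cocycle.
have z_l := oscBr_free_l osc_free_z.
have z_r := oscBr_free_r osc_free_z.
apply: bform_basis => k; case_coord k.
- have := cocycle (dl (ie i0)) (dl (ic i0)) (dl m1).
  by rewrite oscBr_basis_e0 oscBr_basis_cm1 oscBr_basis_m1e !bformZl !bform_diag // !mulr0 !addr0.
- exact: bform_diag.
- have := cocycle (dl m1) (dl z) (dl (ic i)).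
  rewrite z_l z_r oscBr_basis_cm1 !bform0l bformZl !add0r => /eqP.
  by rewrite mulf_eq0 (negbTE (lam_neq0 _)) /= => /eqP Hi; rewrite bform_skew // Hi oppr0.
- have := cocycle (dl m1) (dl z) (dl (ie i)).
  rewrite z_l z_r oscBr_basis_em1 !bform0l bformZl !add0r => /eqP.
  by rewrite mulf_eq0 oppr_eq0 (negbTE (lam_neq0 _)) /= => /eqP Hi; rewrite bform_skew // Hi oppr0.
- have := cocycle (dl (ie i0)) (dl (ic i0)) (dl (ia i)).
  rewrite (oscBr_free_r (osc_free_a i)) (oscBr_free_l (osc_free_a i)).
  by rewrite oscBr_basis_e0 !bform0l !addr0.
Qed.

End Oscillator.

Theorem mainTheorem9 (R : realType) (n p : nat) (lam : 'I_n -> R)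
    (B : 'M[R]_p) :
  (0 < n)%N ->
  (forall i, 0 < lam i) ->
  (forall i j : 'I_n, (i <= j)%N -> lam i <= lam j) ->
  B^T = B -> B \in unitmx ->
  (forall D : 'M[R]_(dimOA n p),
     (forall u v, oscBr lam u v *m D = oscBr lam (u *m D) v + oscBr lam u (v *m D)) ->
     (forall u v, oscForm lam B (u *m D) v + oscForm lam B u (v *m D) = 0) ->
     e0 R n p *m D = 0)
  /\ (forall k : nat, (0 < k)%N -> ~ k_symplectic (@oscBr R n p lam) k).
Proof.
move=> n_gt0 lam_gt0 _ _ _.
have lam_neq0 i : lam i != 0 by rewrite gt_eqF.
pose i0 := Ordinal n_gt0.
split=> [D|k _].
- exact: (@skew_derivation_e0 R n p lam lam_neq0 B i0 D).
- apply: (@kernel_obstruction _ _ _ (e0 R n p)).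
    exact: e0_neq0.
  exact: (@cocycle_kernel_e0 R n p lam lam_neq0 i0).
Qed.
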